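(* The function $h$ satisfies $h(\emptyset)=0$ and, for every nonempty finite $L\subseteq\mathbb{N}$, $$h(L)=1+\max_{M\in S(L)}\min\{h(L\cap M),\,h(L\cap(M-1))\},$$ where $S(L)$ is the set of all finite $M\subseteq\mathbb{N}$ with $M\neq L$ and $0<|M|\le|L|$.
   Context: $\mathbb{N}=\{0,1,2,\ldots\}$. For a finite $L\subseteq\mathbb{N}$ and an integer $r$, write $L+r:=\{x+r: x\in L,\ x+r\ge 0\}$ (so $L-1=\{x-1:x\in L, x\ge1\}$). Define $h$ on finite subsets of $\mathbb{N}$ recursively on $|L|$: $h(\emptyset)=0$, and for $L\neq\emptyset$, $$h(L)=1+\max\Big\{h(L\cap(L+1)),\ \max_{M\in T(L)}\min\{h(L\cap M),\,h(L\cap(M-1))\}\Big\},$$ where $T(L)$ is the set of all finite $M\subseteq\mathbb{N}$ with $M\notin\{L,L+1\}$ and $0<|M|\le|L|$ (all sets $L\cap(L+1)$, $L\cap M$, $L\cap(M-1)$ appearing here have size less than $|L|$, so the recursion is well defined). *)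

(* Finite subsets of N are represented canonically as
   strictly increasing sequences of naturals (sorted ltn). *)
From mathcomp Require Import all_boot.
Set Implicit Arguments. Unset Strict Implicit. Unset Printing Implicit Defensive.

Definition fsetN (L : seq nat) : bool := sorted ltn L.

Definition inter (L M : seq nat) : seq nat := [seq x <- L | x \in M].
Definition shift_up (L : seq nat) : seq nat := [seq x.+1 | x <- L].
Definition shift_down (M : seq nat) : seq nat := [seq x.-1 | x <- M & 0 < x].

Definition is_max (P : nat -> Prop) (m : nat) : Prop :=
  P m /\ forall k, P k -> k <= m.

(* values max-ed over in the defining recursion of h (with T(L)) *)
Definition rec_vals (f : seq nat -> nat) (L : seq nat) (k : nat) : Prop :=
  k = f (inter L (shift_up L)) \/
  exists M, [/\ fsetN M, M <> L, M <> shift_up L, 0 < size M <= size L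
     & k = minn (f (inter L M)) (f (inter L (shift_down M)))].

Definition is_h (f : seq nat -> nat) : Prop :=
  f [::] = 0 /\
  forall L, fsetN L -> L <> [::] ->
    exists m, is_max (rec_vals f L) m /\ f L = m.+1.

Definition S_vals (f : seq nat -> nat) (L : seq nat) (k : nat) : Prop :=
  exists M, [/\ fsetN M, M <> L, 0 < size M <= size L
     & k = minn (f (inter L M)) (f (inter L (shift_down M)))].

From mathcomp Require Import all_boot.
From Stdlib Require Import ClassicalEpsilon FunctionalExtensionality PropExtensionality.

(* 1. Every set fed to a recursive call is strictly smaller than L: a sorted
      set of size at most |L| containing L is L itself, and similarly for L+1.
   2. For a fixed f the values in the recursion are values of f on subsets of
      L, hence bounded, so the maximum exists (classically).
   3. Hence h exists: iterate the recursion with fuel, choosing the maximum by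
      Hilbert's epsilon; the value stabilises once the fuel reaches |L|.
   4. For any h, the choice M = L+1 contributes min(h(L∩(L+1)), h(L)) =
      h(L∩(L+1)), since h(L) exceeds every value of the recursion.  So the
      maxima over T(L) ∪ {L+1-term} and over S(L) = T(L) ∪ {L+1} coincide. *)

Lemma size_filter_lt (T : Type) (a : pred T) (s : seq T) :
  ~~ all a s -> size (filter a s) < size s.
Proof. by rewrite all_count size_filter ltn_neqAle count_size andbT. Qed.

Lemma sorted_eq_subset (T : eqType) (r : rel T) (A B : seq T) :
  transitive r -> irreflexive r -> sorted r A -> sorted r B ->
  {subset A <= B} -> size B <= size A -> A = B.
Proof.
move=> r_trans r_irr sA sB AB szBA.
have [_ eqAB] := uniq_min_size (sorted_uniq r_trans r_irr sA) AB szBA.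
exact: irr_sorted_eq sA sB eqAB.
Qed.

Lemma shift_up_sorted (L : seq nat) : fsetN L -> fsetN (shift_up L).
Proof. by rewrite /fsetN /shift_up sorted_map. Qed.

(* |L ∩ (L+1)| < |L|: the minimum of L is not in L+1. *)
Lemma size_inter_shift_up (L : seq nat) : fsetN L -> L <> [::] ->
  size (inter L (shift_up L)) < size L.
Proof.
case: L => [//|x l] sL _; apply: size_filter_lt.
apply/negP => /allP /(_ x (mem_head _ _)) /mapP [y yL xE].
suff : x <= y by rewrite xE ltnn.
move: yL; rewrite inE => /orP [/eqP -> //| yl].
exact/ltnW/(allP (order_path_min ltn_trans sL)).
Qed.

Lemma size_inter_lt (L M : seq nat) : fsetN L -> fsetN M -> M <> L ->
  size M <= size L -> size (inter L M) < size L.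
Proof.
move=> sL sM neML szML; apply: size_filter_lt; apply/negP => /allP LM.
apply: neML; apply/esym/(@sorted_eq_subset _ ltn) => //; [exact: ltn_trans|exact: ltnn].
Qed.

(* |L ∩ (M-1)| < |L| for M ≠ L+1 with |M| ≤ |L|: otherwise L+1 ⊆ M. *)
Lemma size_inter_shift_down_lt (L M : seq nat) : fsetN L -> fsetN M ->
  M <> shift_up L -> size M <= size L -> size (inter L (shift_down M)) < size L.
Proof.
move=> sL sM neM szML; apply: size_filter_lt; apply/negP => /allP LM.
apply: neM; apply/esym/(@sorted_eq_subset _ ltn); rewrite ?size_map //.
- exact: ltn_trans.
- exact: ltnn.
- exact: shift_up_sorted.
move=> y /mapP [x /LM /mapP [z]]; rewrite mem_filter => /andP [z_gt0 zM] -> ->.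
by rewrite prednK.
Qed.

Lemma nat_max_exists (P : nat -> Prop) (a B : nat) :
  P a -> (forall k, P k -> k <= B) -> exists m, is_max P m.
Proof.
elim: B => [|B IH] Pa bound.
  by exists 0; split => [|k /bound //]; move: (bound a Pa); rewrite leqn0 => /eqP <-.
have [PB|nPB] := classic (P B.+1); first by exists B.+1.
apply: IH => // k Pk; move: (bound k Pk); rewrite leq_eqVlt => /orP [/eqP ek|//].
by move: Pk; rewrite ek.
Qed.

Lemma inter_le_bigmax (f : seq nat -> nat) (L X : seq nat) :
  f (inter L X) <= \max_(t : (size L).-tuple bool) f (mask t L).
Proof.
rewrite /inter filter_mask.
by have := @leq_bigmax _ (fun t : (size L).-tuple bool => f (mask t L))
               (map_tuple (fun x => x \in X) (in_tuple L)).
Qed.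

Lemma rec_vals_max (f : seq nat -> nat) (L : seq nat) :
  exists m, is_max (rec_vals f L) m.
Proof.
apply: (@nat_max_exists _ (f (inter L (shift_up L)))); first by left.
move=> k [->|[M [_ _ _ _ ->]]]; first exact: inter_le_bigmax.
exact: leq_trans (geq_minl _ _) (inter_le_bigmax _ _ _).
Qed.

Lemma rec_vals_local (f1 f2 : seq nat -> nat) (L : seq nat) :
  fsetN L -> L <> [::] -> (forall s, size s < size L -> f1 s = f2 s) ->
  rec_vals f1 L = rec_vals f2 L.
Proof.
move=> sL neL f12.
have sub g1 g2 : (forall s, size s < size L -> g1 s = g2 s) ->
    forall k, rec_vals g1 L k -> rec_vals g2 L k.
  move=> g12 k [->|[M [sM neML neU /andP [M_gt0 szM] ->]]].
    by left; rewrite g12 // size_inter_shift_up.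
  right; exists M; split; rewrite ?M_gt0 //.
  by rewrite g12 ?size_inter_lt // [g1 _]g12 ?size_inter_shift_down_lt.
apply: functional_extensionality => k; apply: propositional_extensionality.
by split; apply: sub => // s /f12 ->.
Qed.

Definition pick_max (P : nat -> Prop) : nat := epsilon (inhabits 0) (is_max P).

Fixpoint h_fuel (n : nat) (L : seq nat) : nat :=
  if n is n'.+1 then
    if fsetN L && (L != [::]) then (pick_max (rec_vals (h_fuel n') L)).+1 else 0
  else 0.

Lemma h_fuelS (n : nat) (L : seq nat) : h_fuel n.+1 L =
  if fsetN L && (L != [::]) then (pick_max (rec_vals (h_fuel n) L)).+1 else 0.
Proof. by []. Qed.

Lemma h_fuel_succ (n : nat) (s : seq nat) :
  size s <= n -> h_fuel n.+1 s = h_fuel n s.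
Proof.
elim: n s => [|n IH] s sz; first by case: s sz.
rewrite [LHS]h_fuelS [RHS]h_fuelS; case: ifP => // /andP [sL /eqP neL].
rewrite (@rec_vals_local (h_fuel n.+1) (h_fuel n)) // => t szt.
by rewrite IH // -ltnS (leq_trans szt).
Qed.

Lemma h_fuel_stable (n : nat) (s : seq nat) :
  size s <= n -> h_fuel n s = h_fuel (size s) s.
Proof.
elim: n => [|n IH] sz; first by move: sz; rewrite leqn0 => /eqP ->.
case: (ltngtP (size s) n.+1) sz => // [lt_sn|->] _ //.
by rewrite h_fuel_succ ?IH.
Qed.

Definition h (L : seq nat) : nat := h_fuel (size L) L.

Lemma h_is_h : is_h h.
Proof.
split=> // L sL neL; case szL: (size L) => [|n]; first by move/size0nil: szL.
have -> : rec_vals h L = rec_vals (h_fuel n) L.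
  by apply: rec_vals_local => // s; rewrite szL ltnS => /h_fuel_stable.
exists (pick_max (rec_vals (h_fuel n) L)); split.
  exact: epsilon_spec (rec_vals_max _ _).
by rewrite /h szL /= sL; case: eqP.
Qed.

Lemma shift_down_up (L : seq nat) : shift_down (shift_up L) = L.
Proof. by rewrite /shift_down /shift_up filter_map filter_predT -map_comp map_id. Qed.

Lemma inter_self (L : seq nat) : inter L L = L.
Proof. exact/all_filterP/allP. Qed.

Lemma shift_up_neq (L : seq nat) : L <> [::] -> shift_up L <> L.
Proof. by case: L => [//|x l] _ [/eqP]; rewrite eqn_leq ltnn. Qed.

(* For a function satisfying the recursion, the maximum over S(L) equals the
   maximum m of the recursion: the only new member M = L+1 of S(L)
   contributes min(f(L ∩ (L+1)), f L) = f(L ∩ (L+1)) ≤ m < f L, which is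
   exactly the auxiliary value of the recursion. *)
Lemma S_vals_max (f : seq nat -> nat) (L : seq nat) (m : nat) :
  fsetN L -> L <> [::] -> is_max (rec_vals f L) m -> f L = m.+1 ->
  is_max (S_vals f L) m.
Proof.
move=> sL neL [m_val bound] fL.
have up_val : minn (f (inter L (shift_up L)))
                   (f (inter L (shift_down (shift_up L)))) =
              f (inter L (shift_up L)).
  by rewrite shift_down_up inter_self fL; apply/minn_idPl/leqW/bound; left.
have up_S : S_vals f L (f (inter L (shift_up L))).
  exists (shift_up L); split; rewrite ?up_val //; first exact: shift_up_sorted.
    exact: shift_up_neq.
  by rewrite size_map lt0n size_eq0 leqnn andbT; apply/eqP.
split.
  by case: m_val => [->|[M [sM neML _ szM ->]]]; [exact: up_S | exists M].
move=> k [M [sM neML szM ->]].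
have [->|neM] := eqVneq M (shift_up L); first by rewrite up_val; apply: bound; left.
by apply: bound; right; exists M; split => //; apply/eqP.
Qed.

Theorem proposition12 :
  (exists f, is_h f) /\
  forall f, is_h f ->
    f [::] = 0 /\
    forall L, fsetN L -> L <> [::] ->
      exists m, is_max (S_vals f L) m /\ f L = m.+1.
Proof.
split; first by exists h; exact: h_is_h.
move=> f [f0 f_rec]; split=> // L sL neL.
have [m [max_m fL]] := f_rec L sL neL.
by exists m; split; first exact: S_vals_max.
Qed.
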